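(* Let $(T_1,T_2,T_3)$ be an associative Clifford extension over $(V,S^0,S^1)$ with $T_1\ne0$. (a) If $\dim V=1$, then there exist a nonzero Euclidean space $\tilde V$ and a $\mathrm{Cl}(\tilde V)$-module $\tilde S^0\oplus\tilde S^1$ such that $(V,S^0,S^1,T_1,T_2,T_3)$ is isomorphic to $(\mathbb R,\tilde V,\tilde V,\tilde S^0,\tilde S^1,\tilde S^1)$, where $\mathbb R$ acts on $\tilde V\oplus\tilde V$ and on $\tilde S^1\oplus\tilde S^1$ by $a\cdot(x,y)=(-ay,ax)$, and both copies of $\tilde V$ act on $\tilde S^0\oplus\tilde S^1$ by the given Clifford action. (b) If $\dim V>1$ and $\dim S^0=2$, then the extension is isomorphic to the model $\mathcal E(\mathbb C,\mathbb C,n)$ for some $n\ge1$. (c) If $\dim V>1$ and $\dim S^0>2$, then the extension is isomorphic to the model $\mathcal E(W,\mathbb H,n)$ for some $n\ge1$ and some real subspace $W\subset\mathbb H$ with $\dim W=\dim V$.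
   Context: All spaces are finite-dimensional real Euclidean. For a Euclidean space $X$, $\mathrm{Cl}(X)$ is the Clifford algebra with $x\cdot x=-|x|^2$; a ''$\mathrm{Cl}(X)$-module $Y\oplus Z$'' is a $\mathbb Z/2$-graded module with $X\cdot Y\subset Z$, $X\cdot Z\subset Y$, $Y\perp Z$, each $x\in X$ acting skew-symmetrically; the action is written $xy$. Let $V\neq0$ be Euclidean and $S^0\oplus S^1$ a nonzero $\mathrm{Cl}(V)$-module. A Clifford extension over $(V,S^0,S^1)$ is a triple of Euclidean spaces $T_1,T_2,T_3$ of equal dimension together with a $\mathrm{Cl}(V)$-module structure on $T_2\oplus T_3$, a $\mathrm{Cl}(S^0)$-module structure on $T_1\oplus T_2$, and a $\mathrm{Cl}(S^1)$-module structure on $T_1\oplus T_3$. It is associative if $(vs^0)t_1=v(s^0t_1)$ for all $v\in V,s^0\in S^0,t_1\in T_1$. An isomorphism of two such data $(V,S^0,S^1,T_1,T_2,T_3)$ is a family of linear isometries of the six spaces intertwining all four Clifford actions. Model extension $\mathcal E(W,\mathbb A,n)$ for $\mathbb A\in\{\mathbb C,\mathbb H\}$, a nonzero real subspace $W\subset\mathbb A$ and $n\ge1$: $V=W$, $S^0=S^1=\mathbb A$, $T_1=T_2=T_3=\mathbb A^n$ (metric $\mathrm{Re}\sum x_i\bar y_i$); for each of the four pairs (acting space $X$, module $Y\oplus Z$) $=(W,S^0\oplus S^1)$, $(S^0,T_1\oplus T_2)$, $(S^1,T_1\oplus T_3)$, $(W,T_2\oplus T_3)$, the action is $x\cdot y=xy$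 for $y\in Y$ and $x\cdot z=-\bar x z$ for $z\in Z$ (left multiplication in $\mathbb A$, coordinatewise on $\mathbb A^n$). *)

From HB Require Import structures.
From mathcomp Require Import all_boot all_order all_algebra.
From mathcomp Require Import reals.
Set Implicit Arguments. Unset Strict Implicit. Unset Printing Implicit Defensive.
Import Order.TTheory GRing.Theory Num.Theory.
Local Open Scope ring_scope.

(* A finite-dimensional Euclidean space of dimension n is modelled (up to
   isometry) by 'rV[R]_n with the standard inner product. *)
Definition dotv {R : realType} {n : nat} (u v : 'rV[R]_n) : R :=
  \sum_(i < n) u 0 i * v 0 i.

(* Action data of X (dim p) on a graded space Y (dim q) (+) Z (dim r):
   ca0 x : Y -> Z and ca1 x : Z -> Y. *)
Record clact (R : realType) (p q r : nat) := ClAct {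
  ca0 : 'rV[R]_p -> 'rV[R]_q -> 'rV[R]_r ;
  ca1 : 'rV[R]_p -> 'rV[R]_r -> 'rV[R]_q }.

Definition is_clmod {R : realType} {p q r : nat} (m : clact R p q r) : Prop :=
  (forall (a : R) x x' y, ca0 m (a *: x + x') y = a *: ca0 m x y + ca0 m x' y) /\
  (forall (a : R) x y y', ca0 m x (a *: y + y') = a *: ca0 m x y + ca0 m x y') /\
  (forall (a : R) x x' z, ca1 m (a *: x + x') z = a *: ca1 m x z + ca1 m x' z) /\
  (forall (a : R) x z z', ca1 m x (a *: z + z') = a *: ca1 m x z + ca1 m x z') /\
  (forall x y z, dotv (ca0 m x y) z = - dotv y (ca1 m x z)) /\
  (forall x y, ca1 m x (ca0 m x y) = - (dotv x x) *: y) /\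
  (forall x z, ca0 m x (ca1 m x z) = - (dotv x x) *: z).

Record cdata (R : realType) := CData {
  dV : nat; dS0 : nat; dS1 : nat; dT1 : nat; dT2 : nat; dT3 : nat;
  mVS : clact R dV dS0 dS1 ;
  mS0 : clact R dS0 dT1 dT2 ;
  mS1 : clact R dS1 dT1 dT3 ;
  mVT : clact R dV dT2 dT3 }.

(* Clifford extension over (V,S0,S1), including the standing assumptions
   V <> 0 and S0 (+) S1 a nonzero Cl(V)-module. *)
Definition clifford_ext {R : realType} (D : cdata R) : Prop :=
  (0 < dV D)%N /\ (0 < dS0 D + dS1 D)%N /\ is_clmod (mVS D) /\
  dT1 D = dT2 D /\ dT2 D = dT3 D /\
  is_clmod (mS0 D) /\ is_clmod (mS1 D) /\ is_clmod (mVT D).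

Definition associative_ext {R : realType} (D : cdata R) : Prop :=
  forall v s t, ca0 (mS1 D) (ca0 (mVS D) v s) t = ca0 (mVT D) v (ca0 (mS0 D) s t).

Definition lin_isom {R : realType} {n m : nat} (f : 'rV[R]_n -> 'rV[R]_m) : Prop :=
  (forall (a : R) u v, f (a *: u + v) = a *: f u + f v) /\
  (forall u v, dotv (f u) (f v) = dotv u v) /\ bijective f.

Definition intertwines {R : realType} {p q r p' q' r' : nat}
  (fX : 'rV[R]_p -> 'rV[R]_p') (fY : 'rV[R]_q -> 'rV[R]_q') (fZ : 'rV[R]_r -> 'rV[R]_r')
  (m : clact R p q r) (m' : clact R p' q' r') : Prop :=
  (forall x y, fZ (ca0 m x y) = ca0 m' (fX x) (fY y)) /\
  (forall x z, fY (ca1 m x z) = ca1 m' (fX x) (fZ z)).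

Definition cdata_iso {R : realType} (D D' : cdata R) : Prop :=
  exists (fV : 'rV[R]_(dV D) -> 'rV[R]_(dV D'))
         (fS0 : 'rV[R]_(dS0 D) -> 'rV[R]_(dS0 D'))
         (fS1 : 'rV[R]_(dS1 D) -> 'rV[R]_(dS1 D'))
         (fT1 : 'rV[R]_(dT1 D) -> 'rV[R]_(dT1 D'))
         (fT2 : 'rV[R]_(dT2 D) -> 'rV[R]_(dT2 D'))
         (fT3 : 'rV[R]_(dT3 D) -> 'rV[R]_(dT3 D')),
    (lin_isom fV /\ lin_isom fS0 /\ lin_isom fS1 /\ lin_isom fT1 /\ lin_isom fT2
      /\ lin_isom fT3) /\
    [/\ intertwines fV fS0 fS1 (mVS D) (mVS D'),
        intertwines fS0 fT1 fT2 (mS0 D) (mS0 D'),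
        intertwines fS1 fT1 fT3 (mS1 D) (mS1 D')
      & intertwines fV fT2 fT3 (mVT D) (mVT D')].

(* Part (a) target: (R, Vt, Vt, St0, St1, St1); R = 'rV_1 acts by
   a.(x,y) = (-a y, a x), both copies of Vt act by the given action m. *)
Definition scal_act {R : realType} (k : nat) : clact R 1 k k :=
  ClAct (fun (a : 'rV[R]_1) (x : 'rV[R]_k) => a 0 0 *: x)
        (fun (a : 'rV[R]_1) (y : 'rV[R]_k) => - (a 0 0) *: y).

Definition ext_a {R : realType} {k s0 s1 : nat} (m : clact R k s0 s1) : cdata R :=
  @CData R 1 k k s0 s1 s1 (scal_act k) m m (scal_act s1).

Definition cf {R : realType} {d : nat} (q : 'rV[R]_d.+1) (k : nat) : R := q 0 (inord k).
Definition mk2 {R : realType} (a b : R) : 'rV[R]_2 := \row_(i < 2) nth 0 [:: a; b] i.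
Definition mk4 {R : realType} (a b c d : R) : 'rV[R]_4 :=
  \row_(i < 4) nth 0 [:: a; b; c; d] i.

Definition cmul {R : realType} (x y : 'rV[R]_2) : 'rV[R]_2 :=
  mk2 (cf x 0 * cf y 0 - cf x 1 * cf y 1) (cf x 0 * cf y 1 + cf x 1 * cf y 0).
Definition cconj {R : realType} (x : 'rV[R]_2) : 'rV[R]_2 := mk2 (cf x 0) (- cf x 1).

Definition hmul {R : realType} (x y : 'rV[R]_4) : 'rV[R]_4 :=
  mk4 (cf x 0 * cf y 0 - cf x 1 * cf y 1 - cf x 2 * cf y 2 - cf x 3 * cf y 3)
      (cf x 0 * cf y 1 + cf x 1 * cf y 0 + cf x 2 * cf y 3 - cf x 3 * cf y 2)
      (cf x 0 * cf y 2 - cf x 1 * cf y 3 + cf x 2 * cf y 0 + cf x 3 * cf y 1)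
      (cf x 0 * cf y 3 + cf x 1 * cf y 2 - cf x 2 * cf y 1 + cf x 3 * cf y 0).
Definition hconj {R : realType} (x : 'rV[R]_4) : 'rV[R]_4 :=
  mk4 (cf x 0) (- cf x 1) (- cf x 2) (- cf x 3).

(* A^n is coded as 'rV_(n*d) via mxvec/vec_mx (row i = i-th coordinate);
   the standard inner product is Re sum x_i conj(y_i). *)
Definition lmulA {R : realType} {d : nat} (n : nat) (mul : 'rV[R]_d -> 'rV[R]_d -> 'rV[R]_d)
  (x : 'rV[R]_d) (t : 'rV[R]_(n * d)) : 'rV[R]_(n * d) :=
  mxvec (\matrix_(i < n) mul x (row i (vec_mx t))).

(* Model E(W, A, n): the real subspace W of A (dim d) is given by a matrix B
   with orthonormal rows (w = dim W); v in 'rV_w corresponds to v *m B in W. *)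
Definition model {R : realType} {d w : nat} (n : nat)
  (mul : 'rV[R]_d -> 'rV[R]_d -> 'rV[R]_d) (cj : 'rV[R]_d -> 'rV[R]_d)
  (B : 'M[R]_(w, d)) : cdata R :=
  @CData R w d d (n * d) (n * d) (n * d)
    (ClAct (fun v s => mul (v *m B) s) (fun v s => - mul (cj (v *m B)) s))
    (ClAct (fun s t => @lmulA R d n mul s t) (fun s t => - @lmulA R d n mul (cj s) t))
    (ClAct (fun s t => @lmulA R d n mul s t) (fun s t => - @lmulA R d n mul (cj s) t))
    (ClAct (fun v t => @lmulA R d n mul (v *m B) t) (fun v t => - @lmulA R d n mul (cj (v *m B)) t)).

(* Fix unit vectors e in V and eps in S0.  Every s in S0 acts on T1 by
   L_s t = - eps (s t); then L_eps = 1 and |L_s t| = |s| |t|, and the L_a with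
   a orthogonal to eps satisfy the Clifford relations
   L_a L_b + L_b L_a = - 2 <a, b>.  Every v in V acts on S0 by
   k_v s = - e (v s), and associativity gives L_(k_v s) = L_(phi v) L_s with
   phi v = k_v eps, an isometric embedding of V into S0 sending e to eps.
   If dim V = 1 the action of e identifies S1 with S0 and T3 with T2.
   Otherwise i = phi e1, for a unit e1 orthogonal to e, gives a complex
   structure: S0 = span(eps, i) is C when dim S0 = 2, and when dim S0 > 2 a
   unit j orthogonal to eps and i together with k = k_e1 j (so L_k = L_i L_j)
   spans a copy of H; a fifth orthonormal vector l cannot exist because
   L_i L_l would both commute and anticommute with L_j.  In both cases S0 is
   an algebra A acting isometrically on T1, so Gram-Schmidt over A yields an
   orthonormal A-basis T1 = A^n, and the other spaces are transported along
   e and eps. *)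
From HB Require Import structures.
From mathcomp Require Import all_boot all_order all_algebra.
From mathcomp Require Import reals.
From mathcomp Require Import ring lra zify.
Set Implicit Arguments. Unset Strict Implicit. Unset Printing Implicit Defensive.
Import Order.TTheory GRing.Theory Num.Theory.
Local Open Scope ring_scope.

Section DotProduct.
Variable R : realType.
Implicit Types a : R.

Lemma dotvC n (u v : 'rV[R]_n) : dotv u v = dotv v u.
Proof. by apply: eq_bigr => i _; rewrite mulrC. Qed.

Lemma dotvE n (u v : 'rV[R]_n) : dotv u v = (u *m v^T) 0 0.
Proof. by rewrite !mxE; apply: eq_bigr => i _; rewrite !mxE. Qed.

Lemma dotvDl n (u u' v : 'rV[R]_n) : dotv (u + u') v = dotv u v + dotv u' v.
Proof. by rewrite !dotvE mulmxDl mxE. Qed.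

Lemma dotvZl n a (u v : 'rV[R]_n) : dotv (a *: u) v = a * dotv u v.
Proof. by rewrite !dotvE -scalemxAl mxE. Qed.

Lemma dotvDr n (u u' v : 'rV[R]_n) : dotv v (u + u') = dotv v u + dotv v u'.
Proof. by rewrite dotvC dotvDl !(dotvC v). Qed.

Lemma dotvZr n a (u v : 'rV[R]_n) : dotv v (a *: u) = a * dotv v u.
Proof. by rewrite dotvC dotvZl dotvC. Qed.

Lemma dotvNl n (u v : 'rV[R]_n) : dotv (- u) v = - dotv u v.
Proof. by rewrite -scaleN1r dotvZl mulN1r. Qed.

Lemma dotvNr n (u v : 'rV[R]_n) : dotv v (- u) = - dotv v u.
Proof. by rewrite dotvC dotvNl dotvC. Qed.

Lemma dotvBl n (u u' v : 'rV[R]_n) : dotv (u - u') v = dotv u v - dotv u' v.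
Proof. by rewrite dotvDl dotvNl. Qed.

Lemma dotv0l n (v : 'rV[R]_n) : dotv 0 v = 0.
Proof. by rewrite dotvE mul0mx mxE. Qed.

Lemma dotv0r n (v : 'rV[R]_n) : dotv v 0 = 0.
Proof. by rewrite dotvC dotv0l. Qed.

Lemma dotv_sumr n I (r : seq I) (P : pred I) (F : I -> 'rV[R]_n) v :
  dotv v (\sum_(i <- r | P i) F i) = \sum_(i <- r | P i) dotv v (F i).
Proof.
elim/big_rec2: _ => [|i y1 y2 _ IH]; first exact: dotv0r.
by rewrite dotvDr IH.
Qed.

Lemma dotv_suml n I (r : seq I) (P : pred I) (F : I -> 'rV[R]_n) v :
  dotv (\sum_(i <- r | P i) F i) v = \sum_(i <- r | P i) dotv (F i) v.
Proof. by rewrite dotvC dotv_sumr; apply: eq_bigr => i _; rewrite dotvC. Qed.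

Lemma dotv_ge0 n (u : 'rV[R]_n) : 0 <= dotv u u.
Proof. by apply: sumr_ge0 => i _; rewrite -expr2 sqr_ge0. Qed.

Lemma dotv_eq0 n (u : 'rV[R]_n) : dotv u u = 0 -> u = 0.
Proof.
move=> /eqP; rewrite /dotv psumr_eq0 => [/allP u0|i _]; last by rewrite -expr2 sqr_ge0.
apply/rowP => i; rewrite mxE; have := u0 i; rewrite mem_index_enum => /(_ isT).
by rewrite mulf_eq0 orbb => /eqP.
Qed.

Lemma dotv_inj n (u v : 'rV[R]_n) : (forall w, dotv u w = dotv v w) -> u = v.
Proof.
move=> uv; apply/eqP; rewrite -subr_eq0; apply/eqP/dotv_eq0.
by rewrite dotvBl uv subrr.
Qed.

Lemma dotv_delta n (i j : 'I_n) :
  dotv (delta_mx 0 i : 'rV[R]_n) (delta_mx 0 j) = (i == j)%:R.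
Proof.
rewrite dotvE mxE (bigD1 i) //= big1 => [|k /negbTE ki]; last first.
  by rewrite !mxE ki andbF mul0r.
by rewrite !mxE !eqxx /= mul1r addr0 eq_sym.
Qed.

Lemma dotv_mxvec m n (Y Y' : 'M[R]_(m, n)) :
  dotv (mxvec Y) (mxvec Y') = \sum_(i < m) dotv (row i Y) (row i Y').
Proof.
rewrite /dotv (reindex (uncurry (@mxvec_index m n))) /=; last exact: curry_mxvec_bij.
by rewrite pair_big /=; apply: eq_bigr => -[i j] _ /=; rewrite !mxvecE !mxE.
Qed.

End DotProduct.

Section LinearFun.
Variables (R : realType) (n k : nat) (f : 'rV[R]_n -> 'rV[R]_k).
Hypothesis f_lin : linear f.

Lemma linfun0 : f 0 = 0.
Proof.
have := f_lin 1 0 0; rewrite scale1r addr0 scale1r => f00.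
by apply: (addrI (f 0)); rewrite addr0 -f00.
Qed.

Lemma linfunD u v : f (u + v) = f u + f v.
Proof. by rewrite -{1}[u]scale1r f_lin scale1r. Qed.

Lemma linfunZ a u : f (a *: u) = a *: f u.
Proof. by rewrite -[a *: u]addr0 f_lin linfun0 addr0. Qed.

Lemma linfunN u : f (- u) = - f u.
Proof. by rewrite -scaleN1r linfunZ scaleN1r. Qed.

Lemma linfunB u v : f (u - v) = f u - f v.
Proof. by rewrite linfunD linfunN. Qed.

Lemma linfun_sum I (r : seq I) (P : pred I) (F : I -> 'rV[R]_n) :
  f (\sum_(i <- r | P i) F i) = \sum_(i <- r | P i) f (F i).
Proof. by elim/big_rec2: _ => [|i y1 y2 _ IH]; rewrite ?linfun0 // linfunD IH. Qed.

Lemma linfun_mx u : f u = u *m lin1_mx f.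
Proof.
rewrite [in RHS](row_sum_delta u) mulmx_suml [in LHS](row_sum_delta u) linfun_sum.
apply: eq_bigr => i _; rewrite linfunZ -scalemxAl -rowE; congr (_ *: _).
by apply/rowP => j; rewrite !mxE.
Qed.

End LinearFun.

Section Isometry.
Variable R : realType.

Definition dotv_preserving n k (f : 'rV[R]_n -> 'rV[R]_k) :=
  forall u v, dotv (f u) (f v) = dotv u v.

Lemma lin_isomP n k (f : 'rV[R]_n -> 'rV[R]_k) :
  lin_isom f <-> [/\ linear f, dotv_preserving f & bijective f].
Proof. by split => [[? [? ?]]|[? ? ?]]. Qed.

Lemma lin_isom_id n : lin_isom (@id 'rV[R]_n).
Proof. by apply/lin_isomP; split => //; exists id. Qed.

Lemma lin_isom_comp n k l (f : 'rV[R]_n -> 'rV[R]_k) (g : 'rV[R]_k -> 'rV[R]_l) :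
  lin_isom f -> lin_isom g -> lin_isom (g \o f).
Proof.
move=> /lin_isomP[fl fd fb] /lin_isomP[gl gd gb]; apply/lin_isomP; split.
- by move=> a u v /=; rewrite fl gl.
- by move=> u v /=; rewrite gd fd.
- exact: bij_comp.
Qed.

Lemma lin_isom_inv n k (f : 'rV[R]_n -> 'rV[R]_k) :
  lin_isom f -> exists g, [/\ lin_isom g, cancel f g & cancel g f].
Proof.
move=> /lin_isomP[fl fd [g fK gK]]; exists g; split => //; apply/lin_isomP; split.
- by move=> a u v; apply: (can_inj fK); rewrite fl !gK.
- by move=> u v; rewrite -fd !gK.
- by exists f.
Qed.

Section Matrix.
Variables (n k : nat) (f : 'rV[R]_n -> 'rV[R]_k).
Hypotheses (f_lin : linear f) (f_dot : dotv_preserving f).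

Lemma lin1_mx_orthonormal : lin1_mx f *m (lin1_mx f)^T = 1%:M.
Proof.
apply/matrixP => i j.
have rowE l : row l (lin1_mx f) = f (delta_mx 0 l) by apply/rowP => c; rewrite !mxE.
rewrite [LHS](_ : _ = dotv (row i (lin1_mx f)) (row j (lin1_mx f))).
  by rewrite !rowE f_dot dotv_delta !mxE.
by rewrite dotvE !mxE; apply: eq_bigr => l _; rewrite !mxE.
Qed.

Lemma dotv_preserving_leq : (n <= k)%N.
Proof.
rewrite -[n](mxrank1 R) -lin1_mx_orthonormal.
exact: leq_trans (mxrankM_maxl _ _) (rank_leq_col _).
Qed.

Lemma dotv_preserving_inj : injective f.
Proof.
move=> u v fuv; apply/eqP; rewrite -subr_eq0; apply/eqP/dotv_eq0.
by rewrite -f_dot linfunB // fuv subrr dotv0l.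
Qed.

End Matrix.

(* The cast [k = n] lets this apply when the two dimensions are only
   propositionally equal, e.g. [n * d] and [N]. *)
Lemma dotv_preserving_isom k n (kn : k = n) (f : 'rV[R]_k -> 'rV[R]_n) :
  linear f -> dotv_preserving f -> lin_isom f.
Proof.
subst k => f_lin f_dot; apply/lin_isomP; split => //.
have ffT := lin1_mx_orthonormal f_dot; have fTf := mulmx1C ffT.
exists (fun v => v *m (lin1_mx f)^T) => u /=.
  by rewrite (linfun_mx f_lin) -mulmxA ffT mulmx1.
by rewrite (linfun_mx f_lin) -mulmxA fTf mulmx1.
Qed.

Lemma exists_unit_orthogonal_image n k (f : 'rV[R]_n -> 'rV[R]_k) :
  linear f -> (n < k)%N ->
  exists x : 'rV[R]_k, dotv x x = 1 /\ forall u, dotv (f u) x = 0.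
Proof.
move=> f_lin nk; set Q := lin1_mx f.
have ker_nz : kermx Q^T != 0.
  rewrite -mxrank_eq0 mxrank_ker subn_eq0 -ltnNge.
  exact: leq_ltn_trans (rank_leq_col _) nk.
have [i yi_nz] : exists i, row i (kermx Q^T) != 0.
  apply/existsP; apply: contraR ker_nz => /existsPn y0; apply/eqP/row_matrixP => i.
  by rewrite row0; apply/eqP/negPn/y0.
set y := row i (kermx Q^T) in yi_nz.
have yQ : y *m Q^T = 0 by rewrite /y -row_mul mulmx_ker row0.
have y_pos : 0 < dotv y y.
  by rewrite lt_def dotv_ge0 andbT; apply: contra yi_nz => /eqP/dotv_eq0 ->.
exists ((Num.sqrt (dotv y y))^-1 *: y); split.
  rewrite dotvZl dotvZr mulrA -expr2 exprVn sqr_sqrtr ?dotv_ge0 // mulVf //.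
  by rewrite gt_eqF.
move=> u; rewrite (linfun_mx f_lin) -/Q dotvZr dotvC (dotvE y (u *m Q)) trmx_mul.
by rewrite mulmxA yQ mul0mx mxE mulr0.
Qed.

End Isometry.

Section CliffordModule.
Variables (R : realType) (p q r : nat) (m : clact R p q r).
Hypothesis m_cl : is_clmod m.
Local Notation c0 := (ca0 m).
Local Notation c1 := (ca1 m).

Lemma ca0_linl y : linear (fun x => c0 x y).
Proof. by case: m_cl => H _ a x x'; rewrite H. Qed.

Lemma ca0_linr x : linear (c0 x).
Proof. by case: m_cl => _ [H _] a y y'; rewrite H. Qed.

Lemma ca1_linl z : linear (fun x => c1 x z).
Proof. by case: m_cl => _ [_ [H _]] a x x'; rewrite H. Qed.

Lemma ca1_linr x : linear (c1 x).
Proof. by case: m_cl => _ [_ [_ [H _]]] a y y'; rewrite H. Qed.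

Lemma ca_skew x y z : dotv (c0 x y) z = - dotv y (c1 x z).
Proof. by case: m_cl => _ [_ [_ [_ [H _]]]]. Qed.

Lemma ca_skew1 x y z : dotv (c1 x z) y = - dotv z (c0 x y).
Proof. by rewrite dotvC (dotvC z) ca_skew opprK. Qed.

Lemma ca10 x y : c1 x (c0 x y) = - dotv x x *: y.
Proof. by case: m_cl => _ [_ [_ [_ [_ [H _]]]]]. Qed.

Lemma ca01 x z : c0 x (c1 x z) = - dotv x x *: z.
Proof. by case: m_cl => _ [_ [_ [_ [_ [_ H]]]]]. Qed.

Lemma ca10_polar x x' y :
  c1 x (c0 x' y) + c1 x' (c0 x y) = - (2 * dotv x x') *: y.
Proof.
have := ca10 (x + x') y.
rewrite (linfunD (ca0_linl y)) (linfunD (ca1_linr _)) !(linfunD (ca1_linl _)) !ca10.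
rewrite !dotvDl !dotvDr (dotvC x' x) => /rowP E; apply/rowP => i.
by move: (E i); rewrite !mxE; lra.
Qed.

Lemma ca01_polar x x' z :
  c0 x (c1 x' z) + c0 x' (c1 x z) = - (2 * dotv x x') *: z.
Proof.
have := ca01 (x + x') z.
rewrite (linfunD (ca1_linl z)) (linfunD (ca0_linr _)) !(linfunD (ca0_linl _)) !ca01.
rewrite !dotvDl !dotvDr (dotvC x' x) => /rowP E; apply/rowP => i.
by move: (E i); rewrite !mxE; lra.
Qed.

Lemma ca0_dot x y y' : dotv (c0 x y) (c0 x y') = dotv x x * dotv y y'.
Proof. by rewrite ca_skew ca10 dotvZr mulNr opprK. Qed.

Lemma ca1_dot x z z' : dotv (c1 x z) (c1 x z') = dotv x x * dotv z z'.
Proof. by rewrite ca_skew1 ca01 dotvZr mulNr opprK. Qed.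

Lemma ca0_dot_polar x x' y y' :
  dotv (c0 x y) (c0 x' y') + dotv (c0 x' y) (c0 x y') = 2 * dotv x x' * dotv y y'.
Proof.
rewrite (dotvC (c0 x y)) (dotvC (c0 x' y)) !ca_skew -opprD -dotvDr dotvC.
by rewrite ca10_polar dotvZl mulNr opprK (dotvC x').
Qed.

Lemma ca0_dotl x x' y : dotv (c0 x y) (c0 x' y) = dotv x x' * dotv y y.
Proof.
have := ca0_dot_polar x x' y y; rewrite (dotvC (c0 x' y)) => E.
apply: (@mulfI _ 2); first by rewrite pnatr_eq0.
by rewrite mulr2n mulrDl mul1r E mulrA.
Qed.

Section UnitVector.
Variable x : 'rV[R]_p.
Hypothesis x_unit : dotv x x = 1.

Lemma ca10K y : - c1 x (c0 x y) = y.
Proof. by rewrite ca10 x_unit scaleN1r opprK. Qed.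

Lemma ca01K z : c0 x (- c1 x z) = z.
Proof. by rewrite (linfunN (ca0_linr x)) ca01 x_unit scaleN1r opprK. Qed.

Lemma ca1N_isom : lin_isom (fun z => - c1 x z).
Proof.
apply/lin_isomP; split.
- by move=> a u v; rewrite (ca1_linr x) opprD scalerN.
- by move=> u v; rewrite dotvNl dotvNr opprK ca1_dot x_unit mul1r.
- by exists (c0 x) => [z|y]; [exact: ca01K | exact: ca10K].
Qed.

End UnitVector.
End CliffordModule.

Section Isomorphisms.
Variable R : realType.

Definition skew_act p q r (m : clact R p q r) :=
  forall x y z, dotv (ca0 m x y) z = - dotv y (ca1 m x z).

Definition cdata_skew (D : cdata R) :=
  [/\ skew_act (mVS D), skew_act (mS0 D), skew_act (mS1 D) & skew_act (mVT D)].

Lemma clmod_skew p q r (m : clact R p q r) : is_clmod m -> skew_act m.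
Proof. exact: ca_skew. Qed.

(* For skew-adjoint actions the second half of [intertwines] follows from the
   first by taking adjoints. *)
Lemma intertwines_ca0 p q r p' q' r' (m : clact R p q r) (m' : clact R p' q' r')
    fX fY fZ :
  skew_act m -> skew_act m' -> lin_isom fY -> lin_isom fZ ->
  (forall x y, fZ (ca0 m x y) = ca0 m' (fX x) (fY y)) ->
  intertwines fX fY fZ m m'.
Proof.
move=> m_skew m'_skew /lin_isomP[_ fYd [gY fYK gYK]] /lin_isomP[_ fZd _] fXYZ.
split => // x z; apply: dotv_inj => w; rewrite -[w]gYK fYd dotvC.
by rewrite -[dotv (gY w) _]opprK -m_skew -fZd fXYZ m'_skew opprK dotvC.
Qed.

Lemma cdata_iso_ca0 (D D' : cdata R) fV fS0 fS1 fT1 fT2 fT3 :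
  cdata_skew D -> cdata_skew D' ->
  lin_isom fV -> lin_isom fS0 -> lin_isom fS1 ->
  lin_isom fT1 -> lin_isom fT2 -> lin_isom fT3 ->
  (forall v s, fS1 (ca0 (mVS D) v s) = ca0 (mVS D') (fV v) (fS0 s)) ->
  (forall s t, fT2 (ca0 (mS0 D) s t) = ca0 (mS0 D') (fS0 s) (fT1 t)) ->
  (forall s t, fT3 (ca0 (mS1 D) s t) = ca0 (mS1 D') (fS1 s) (fT1 t)) ->
  (forall v t, fT3 (ca0 (mVT D) v t) = ca0 (mVT D') (fV v) (fT2 t)) ->
  cdata_iso D D'.
Proof.
move=> [sVS sS0 sS1 sVT] [sVS' sS0' sS1' sVT'] iV iS0 iS1 iT1 iT2 iT3 eVS eS0 eS1 eVT.
exists fV, fS0, fS1, fT1, fT2, fT3.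
by split; [split; [|split; [|split; [|split; [|split]]]] | split; apply: intertwines_ca0].
Qed.

End Isomorphisms.

Section DimensionOne.
Variables (R : realType) (m m' N : nat).
Variables (mVS : clact R 1 m m') (mS0 : clact R m N N) (mS1 : clact R m' N N)
  (mVT : clact R 1 N N).
Hypotheses (VS_cl : is_clmod mVS) (S0_cl : is_clmod mS0) (S1_cl : is_clmod mS1)
  (VT_cl : is_clmod mVT).
Hypothesis assoc : forall v s t, ca0 mS1 (ca0 mVS v s) t = ca0 mVT v (ca0 mS0 s t).
Hypothesis S_nz : (0 < m + m')%N.

Let e : 'rV[R]_1 := delta_mx 0 0.
Let e_unit : dotv e e = 1. Proof. by rewrite dotv_delta eqxx. Qed.

Lemma rV1_scale (v : 'rV[R]_1) : v = v 0 0 *: e.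
Proof. by apply/rowP => i; rewrite ord1 !mxE /= mulr1. Qed.

Lemma scal_act_skew k : skew_act (@scal_act R k).
Proof. by move=> a x z /=; rewrite dotvZl dotvZr mulNr opprK. Qed.

Lemma dim_one_S0_gt0 : (0 < m)%N.
Proof.
case: (posnP m) => // m0; move: S_nz; rewrite m0 add0n => m'0.
have S0_0 : forall u : 'rV[R]_m, u = 0 by rewrite m0 => u; apply/rowP => -[].
have := ca01K VS_cl e_unit (delta_mx 0 (Ordinal m'0)).
rewrite (S0_0 (- _)) (linfun0 (ca0_linr VS_cl e)) => /rowP/(_ (Ordinal m'0)).
by rewrite !mxE eqxx /= => /eqP; rewrite eq_sym oner_eq0.
Qed.

Lemma ca10_rV1 k k' (mk : clact R 1 k k') (mk_cl : is_clmod mk) v s :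
  - ca1 mk e (ca0 mk v s) = v 0 0 *: s.
Proof.
rewrite {1}(rV1_scale v) (linfunZ (ca0_linl mk_cl s)) (linfunZ (ca1_linr mk_cl _)).
by rewrite -scalerN (ca10K mk_cl e_unit).
Qed.

Lemma dim_one_iso :
  cdata_iso (@CData R 1 m m' N N N mVS mS0 mS1 mVT) (ext_a mS0).
Proof.
have iS1 := ca1N_isom VS_cl e_unit; have iT3 := ca1N_isom VT_cl e_unit.
have i_id n := @lin_isom_id R n.
apply: (@cdata_iso_ca0 _ (@CData R 1 m m' N N N mVS mS0 mS1 mVT) (ext_a mS0)
  id id _ id id _ _ _ (i_id _) (i_id _) iS1 (i_id _) (i_id _) iT3) => /=.
- by split; exact: clmod_skew.
- by split; first [exact: scal_act_skew | exact: clmod_skew].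
- by move=> v s; rewrite ca10_rV1.
- by [].
- by move=> s t; rewrite -[in LHS](ca01K VS_cl e_unit s) assoc (ca10K VT_cl e_unit).
- by move=> v t; rewrite ca10_rV1.
Qed.

End DimensionOne.

Section FreeModule.
Variables (R : realType) (d N : nat).
Variables (rho : 'rV[R]_d -> 'rV[R]_N -> 'rV[R]_N)
  (mul : 'rV[R]_d -> 'rV[R]_d -> 'rV[R]_d) (cj : 'rV[R]_d -> 'rV[R]_d).
Hypotheses (rho_linl : forall t, linear (fun x => rho x t))
  (rho_linr : forall x, linear (rho x)).
Hypothesis rho_dot : forall x y t, dotv (rho x t) (rho y t) = dotv x y * dotv t t.
Hypothesis rho_adj : forall x t t', dotv (rho x t) t' = dotv t (rho (cj x) t').
Hypothesis rho_mul : forall x y t, rho (mul x y) t = rho x (rho y t).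

Definition frame_map n (ts : seq 'rV[R]_N) (y : 'rV[R]_(n * d)) : 'rV[R]_N :=
  \sum_(j < n) rho (row j (vec_mx y)) (nth 0 ts j).

Definition orthoframe n (ts : seq 'rV[R]_N) :=
  size ts = n /\ forall (i j : 'I_n) x y,
    dotv (rho x (nth 0 ts i)) (rho y (nth 0 ts j)) = (i == j)%:R * dotv x y.

Lemma frame_map_lin n ts : linear (@frame_map n ts).
Proof.
move=> a u v; rewrite /frame_map scaler_sumr -big_split /=; apply: eq_bigr => j _.
by rewrite linearP /= linearP /= rho_linl.
Qed.

Lemma frame_map_dot n ts : orthoframe n ts -> dotv_preserving (@frame_map n ts).
Proof.
move=> [_ o] u v; rewrite /frame_map dotv_suml -[u]vec_mxK -[v]vec_mxK dotv_mxvec !vec_mxK.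
apply: eq_bigr => i _; rewrite dotv_sumr (bigD1 i) //= big1 => [|j ji].
  by rewrite o eqxx mul1r addr0.
by rewrite o eq_sym (negbTE ji) mul0r.
Qed.

Lemma frame_map_lmul n ts x y :
  frame_map ts (@lmulA R d n mul x y) = rho x (frame_map ts y).
Proof.
rewrite /frame_map /lmulA mxvecK (linfun_sum (rho_linr x)); apply: eq_bigr => j _.
by rewrite rowK rho_mul.
Qed.

Lemma frame_map_single n ts (j : 'I_n) (z : 'rV[R]_d) :
  frame_map ts (mxvec (\matrix_(i < n, c < d) (if i == j then z 0 c else 0)))
  = rho z (nth 0 ts j).
Proof.
rewrite /frame_map mxvecK (bigD1 j) //= big1 => [|i ij].
  by rewrite addr0; congr (rho _ _); apply/rowP => c; rewrite !mxE eqxx.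
rewrite (_ : row i _ = 0) ?(linfun0 (rho_linl _)) //.
by apply/rowP => c; rewrite !mxE (negbTE ij).
Qed.

(* One Gram-Schmidt step: a unit vector orthogonal to the span of the frame
   is orthogonal to the whole A-submodule it generates, by [rho_adj]. *)
Lemma orthoframe_rcons n ts : orthoframe n ts -> (n * d < N)%N ->
  exists x, orthoframe n.+1 (rcons ts x).
Proof.
move=> [sz o] nN.
have [x [x_unit x_orth]] := exists_unit_orthogonal_image (@frame_map_lin n ts) nN.
have x_orth1 (j : 'I_n) z : dotv (rho z (nth 0 ts j)) x = 0.
  by rewrite -frame_map_single x_orth.
exists x; split; first by rewrite size_rcons sz.
have nthE (i : 'I_n.+1) : nth 0 (rcons ts x) i = if (i < n)%N then nth 0 ts i else x.
  rewrite nth_rcons sz; case: ltnP => // ni.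
  by rewrite (_ : nat_of_ord i == n) // eqn_leq ni -ltnS ltn_ord.
have ord_max_eq (i : 'I_n.+1) : (n <= i)%N -> nat_of_ord i = n.
  by move=> ni; apply/eqP; rewrite eqn_leq ni andbT -ltnS ltn_ord.
move=> i j a b; rewrite !nthE.
case: (ltnP i n) => hi; case: (ltnP j n) => hj.
- exact: (o (Ordinal hi) (Ordinal hj)).
- rewrite dotvC rho_adj -rho_mul dotvC (x_orth1 (Ordinal hi)).
  by rewrite (_ : (i == j) = false) ?mul0r // -val_eqE /= (ord_max_eq j hj) ltn_eqF.
- rewrite rho_adj -rho_mul dotvC (x_orth1 (Ordinal hj)).
  by rewrite (_ : (i == j) = false) ?mul0r // -val_eqE /= (ord_max_eq i hi) gtn_eqF.
- rewrite rho_dot x_unit mulr1 (_ : (i == j) = true) ?mul1r //.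
  by rewrite -val_eqE /= (ord_max_eq i hi) (ord_max_eq j hj) eqxx.
Qed.

Hypothesis d_gt0 : (0 < d)%N.

Lemma orthoframe_complete n ts : orthoframe n ts ->
  exists n' ts', orthoframe n' ts' /\ (n' * d)%N = N.
Proof.
move=> o; have [k] := ubnP (N - n * d); elim: k n ts o => // k IH n ts o lt_k.
have le := dotv_preserving_leq (frame_map_dot o).
case: (ltngtP (n * d) N) => [lt | gt | eq]; [|lia|by exists n, ts].
have [x o'] := orthoframe_rcons o lt.
have le' := dotv_preserving_leq (frame_map_dot o').
by apply: IH o' _; rewrite mulSn in le' *; lia.
Qed.

Lemma free_module_isometry : exists n (g : 'rV[R]_(n * d) -> 'rV[R]_N),
  [/\ lin_isom g, forall x y, g (@lmulA R d n mul x y) = rho x (g y) & (n * d)%N = N].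
Proof.
have [|n [ts [o nd]]] := @orthoframe_complete 0 [::]; first by split => // -[].
exists n, (frame_map ts); split => //; last exact: frame_map_lmul.
by apply: (dotv_preserving_isom nd); [exact: frame_map_lin | exact: frame_map_dot].
Qed.

End FreeModule.

Section Models.
Variable R : realType.

Lemma lmulA_skew d n (mul : 'rV[R]_d -> 'rV[R]_d -> 'rV[R]_d) cj :
  (forall x y z, dotv (mul x y) z = dotv y (mul (cj x) z)) ->
  forall x y z, dotv (@lmulA R d n mul x y) z = dotv y (@lmulA R d n mul (cj x) z).
Proof.
move=> mul_skew x y z; rewrite /lmulA -[z]vec_mxK -[y]vec_mxK !dotv_mxvec !vec_mxK.
by apply: eq_bigr => i _; rewrite !rowK mul_skew.
Qed.

Lemma model_skew d w n (mul : 'rV[R]_d -> 'rV[R]_d -> 'rV[R]_d) cj (B : 'M[R]_(w, d)) :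
  (forall x y z, dotv (mul x y) z = dotv y (mul (cj x) z)) ->
  cdata_skew (model n mul cj B).
Proof.
move=> mul_skew.
by split => x y z /=; rewrite dotvNr opprK ?mul_skew ?(lmulA_skew mul_skew).
Qed.

Lemma cf2_0 (a b : R) : cf (mk2 a b) 0 = a. Proof. by rewrite /cf mxE inordK. Qed.
Lemma cf2_1 (a b : R) : cf (mk2 a b) 1 = b. Proof. by rewrite /cf mxE inordK. Qed.
Lemma cf4_0 (a b c d : R) : cf (mk4 a b c d) 0 = a. Proof. by rewrite /cf mxE inordK. Qed.
Lemma cf4_1 (a b c d : R) : cf (mk4 a b c d) 1 = b. Proof. by rewrite /cf mxE inordK. Qed.
Lemma cf4_2 (a b c d : R) : cf (mk4 a b c d) 2 = c. Proof. by rewrite /cf mxE inordK. Qed.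
Lemma cf4_3 (a b c d : R) : cf (mk4 a b c d) 3 = d. Proof. by rewrite /cf mxE inordK. Qed.
Definition cfE := (cf2_0, cf2_1, cf4_0, cf4_1, cf4_2, cf4_3).

Lemma cfD d k (a : R) (x y : 'rV[R]_d.+1) : cf (a *: x + y) k = a * cf x k + cf y k.
Proof. by rewrite /cf !mxE. Qed.

Lemma mk2E (x : 'rV[R]_2) : x = mk2 (cf x 0) (cf x 1).
Proof.
apply/rowP => i; rewrite /cf !mxE.
by case: i => -[|[|//]] Hi /=; congr (x 0 _); apply/val_inj; rewrite /= inordK.
Qed.

Lemma mk4E (x : 'rV[R]_4) : x = mk4 (cf x 0) (cf x 1) (cf x 2) (cf x 3).
Proof.
apply/rowP => i; rewrite /cf !mxE.
by case: i => -[|[|[|[|//]]]] Hi /=; congr (x 0 _); apply/val_inj; rewrite /= inordK.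
Qed.

Lemma dotv2 (x y : 'rV[R]_2) : dotv x y = cf x 0 * cf y 0 + cf x 1 * cf y 1.
Proof.
by rewrite {1}(mk2E x) {1}(mk2E y) /dotv !big_ord_recr big_ord0 /= !mxE /= add0r.
Qed.

Lemma dotv4 (x y : 'rV[R]_4) : dotv x y =
  cf x 0 * cf y 0 + cf x 1 * cf y 1 + cf x 2 * cf y 2 + cf x 3 * cf y 3.
Proof.
by rewrite {1}(mk4E x) {1}(mk4E y) /dotv !big_ord_recr big_ord0 /= !mxE /= add0r.
Qed.

Lemma cmulr1 (x : 'rV[R]_2) : cmul x (mk2 1 0) = x.
Proof. by rewrite [RHS]mk2E /cmul !cfE; congr mk2; ring. Qed.

Lemma hmulr1 (x : 'rV[R]_4) : hmul x (mk4 1 0 0 0) = x.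
Proof. by rewrite [RHS]mk4E /hmul !cfE; congr mk4; ring. Qed.

Lemma cmul_skew (x y z : 'rV[R]_2) : dotv (cmul x y) z = dotv y (cmul (cconj x) z).
Proof. by rewrite !dotv2 /cmul /cconj !cfE; ring. Qed.

Lemma hmul_skew (x y z : 'rV[R]_4) : dotv (hmul x y) z = dotv y (hmul (hconj x) z).
Proof. by rewrite !dotv4 /hmul /hconj !cfE; ring. Qed.

End Models.

Section Extension.
Variables (R : realType) (p m m' N : nat).
Variables (mVS : clact R p m m') (mS0 : clact R m N N) (mS1 : clact R m' N N)
  (mVT : clact R p N N).
Hypotheses (VS_cl : is_clmod mVS) (S0_cl : is_clmod mS0) (S1_cl : is_clmod mS1)
  (VT_cl : is_clmod mVT).
Hypothesis assoc : forall v s t, ca0 mS1 (ca0 mVS v s) t = ca0 mVT v (ca0 mS0 s t).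
Hypotheses (p_gt0 : (0 < p)%N) (m_gt0 : (0 < m)%N) (N_gt0 : (0 < N)%N).

Local Notation A0 := (ca0 mVS). Local Notation A1 := (ca1 mVS).
Local Notation B0 := (ca0 mS0). Local Notation B1 := (ca1 mS0).
Local Notation C0 := (ca0 mS1).
Local Notation E0 := (ca0 mVT). Local Notation E1 := (ca1 mVT).
Local Notation D := (@CData R p m m' N N N mVS mS0 mS1 mVT).

Definition eV : 'rV[R]_p := delta_mx 0 (Ordinal p_gt0).
Definition eS : 'rV[R]_m := delta_mx 0 (Ordinal m_gt0).
Definition eT : 'rV[R]_N := delta_mx 0 (Ordinal N_gt0).

Lemma eV_unit : dotv eV eV = 1. Proof. by rewrite dotv_delta eqxx. Qed.
Lemma eS_unit : dotv eS eS = 1. Proof. by rewrite dotv_delta eqxx. Qed.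
Lemma eT_unit : dotv eT eT = 1. Proof. by rewrite dotv_delta eqxx. Qed.

Definition vact v s := - A1 eV (A0 v s).
Definition vemb v := vact v eS.
Definition smul s t := - B1 eS (B0 s t).
Definition sconj s := (2 * dotv s eS) *: eS - s.

Lemma smul_eS t : smul eS t = t. Proof. exact: (ca10K S0_cl eS_unit). Qed.

Lemma smul_linr s : linear (smul s).
Proof. by move=> a u v; rewrite /smul (ca0_linr S0_cl) (ca1_linr S0_cl) opprD scalerN. Qed.

Lemma smul_linl t : linear (smul^~ t).
Proof. by move=> a u v; rewrite /smul (ca0_linl S0_cl) (ca1_linr S0_cl) opprD scalerN. Qed.

Lemma vemb_lin : linear vemb.
Proof.
by move=> a u v; rewrite /vemb /vact (ca0_linl VS_cl) (ca1_linr VS_cl) opprD scalerN.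
Qed.

Lemma smul_dot s s' t : dotv (smul s t) (smul s' t) = dotv s s' * dotv t t.
Proof. by rewrite dotvNl dotvNr opprK (ca1_dot S0_cl) eS_unit mul1r (ca0_dotl S0_cl). Qed.

Lemma vact_dot v s s' : dotv (vact v s) (vact v s') = dotv v v * dotv s s'.
Proof. by rewrite dotvNl dotvNr opprK (ca1_dot VS_cl) eV_unit mul1r (ca0_dot VS_cl). Qed.

Lemma vemb_dot : dotv_preserving vemb.
Proof.
move=> v v'; rewrite dotvNl dotvNr opprK (ca1_dot VS_cl) eV_unit mul1r.
by rewrite (ca0_dotl VS_cl) eS_unit mulr1.
Qed.

Lemma vemb_eV : vemb eV = eS. Proof. exact: (ca10K VS_cl eV_unit). Qed.

(* This is where associativity enters: moving [v] from S0 to T2 through S1. *)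
Lemma smul_vact v s t : smul (vact v s) t = smul (vemb v) (smul s t).
Proof.
have vact_T s' t' : - E1 eV (E0 v (B0 s' t')) = B0 (vact v s') t'.
  rewrite -assoc -[A0 v s'](ca01K VS_cl eV_unit) assoc.
  exact: (ca10K VT_cl eV_unit).
by rewrite /smul -[in RHS]vact_T (ca01K S0_cl eS_unit) vact_T.
Qed.

Lemma smul_smul_orth a b t : dotv a eS = 0 -> smul a (smul b t) = B1 a (B0 b t).
Proof.
move=> a_eS.
have B01 u : B0 a (- B1 eS u) = B0 eS (B1 a u).
  have := ca01_polar S0_cl a eS u; rewrite a_eS mulr0 oppr0 scale0r => /eqP.
  by rewrite addr_eq0 => /eqP H; rewrite (linfunN (ca0_linr S0_cl a)) H opprK.
by rewrite {1}/smul B01 (ca10K S0_cl eS_unit).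
Qed.

Lemma smul_anticomm a b t : dotv a eS = 0 -> dotv b eS = 0 ->
  smul a (smul b t) + smul b (smul a t) = - (2 * dotv a b) *: t.
Proof. by move=> a_eS b_eS; rewrite !smul_smul_orth // (ca10_polar S0_cl). Qed.

Lemma smul_anticomm_orth a b t : dotv a eS = 0 -> dotv b eS = 0 -> dotv a b = 0 ->
  smul a (smul b t) = - smul b (smul a t).
Proof.
move=> a_eS b_eS ab; apply/eqP; rewrite -addr_eq0 smul_anticomm //.
by rewrite ab mulr0 oppr0 scale0r.
Qed.

Lemma smul_sq a t : dotv a eS = 0 -> smul a (smul a t) = - dotv a a *: t.
Proof.
move=> a_eS; have /rowP E := smul_anticomm t a_eS a_eS; apply/rowP => i.
by move: (E i); rewrite !mxE; lra.
Qed.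

Lemma smul_adj s t t' : dotv (smul s t) t' = dotv t (smul (sconj s) t').
Proof.
have smul_dotE u y z : dotv (smul u y) z = dotv (B0 u y) (B0 eS z).
  by rewrite dotvNl (ca_skew1 S0_cl) opprK.
rewrite smul_dotE (dotvC t) smul_dotE /sconj (linfunB (ca0_linl S0_cl _)).
rewrite (linfunZ (ca0_linl S0_cl _)) dotvBl dotvZl (ca0_dot S0_cl) eS_unit mul1r.
have := ca0_dot_polar S0_cl s eS t t'.
by rewrite (dotvC t' t) (dotvC (B0 s t')) => <-; rewrite addrK.
Qed.

Lemma smul_eT_inj : injective (smul^~ eT).
Proof.
apply: (dotv_preserving_inj (smul_linl eT)) => s s'.
by rewrite smul_dot eT_unit mulr1.
Qed.

Lemma vact_skew v s s' : dotv v eV = 0 -> dotv (vact v s) s' = - dotv s (vact v s').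
Proof.
move=> v_eV; rewrite dotvNl dotvNr opprK (ca_skew1 VS_cl) opprK (dotvC s) (ca_skew1 VS_cl).
have := ca0_dot_polar VS_cl v eV s s'; rewrite v_eV mulr0 mul0r (dotvC (A0 eV s)).
by lra.
Qed.

Section ModelIso.
Variables (d : nat) (mul : 'rV[R]_d -> 'rV[R]_d -> 'rV[R]_d) (cj : 'rV[R]_d -> 'rV[R]_d)
  (one : 'rV[R]_d) (gS : 'rV[R]_d -> 'rV[R]_m).
Hypotheses (gS_isom : lin_isom gS) (gS_one : gS one = eS).
Hypothesis mul1 : forall x, mul x one = x.
Hypothesis smul_gS_mul : forall x y t, smul (gS (mul x y)) t = smul (gS x) (smul (gS y) t).
Hypothesis gS_conj : forall x, gS (cj x) = sconj (gS x).
Hypothesis mul_skew : forall x y z, dotv (mul x y) z = dotv y (mul (cj x) z).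
Variables (w : nat) (fV : 'rV[R]_p -> 'rV[R]_w) (B : 'M[R]_(w, d)).
Hypotheses (fV_isom : lin_isom fV) (gS_vemb : forall v, gS (fV v *m B) = vemb v).
Hypothesis d_gt0 : (0 < d)%N.

Lemma vact_gS v x : vact v (gS x) = gS (mul (fV v *m B) x).
Proof. by apply: smul_eT_inj; rewrite /= smul_vact -gS_vemb smul_gS_mul. Qed.

Lemma T1_free_module : exists n (gT : 'rV[R]_(n * d) -> 'rV[R]_N),
  [/\ lin_isom gT, forall x y, gT (@lmulA R d n mul x y) = smul (gS x) (gT y)
    & (n * d)%N = N].
Proof.
have /lin_isomP[gS_lin gS_dot _] := gS_isom.
apply: (@free_module_isometry _ _ _ (fun x => smul (gS x)) mul cj) => //.
- by move=> t a x y; rewrite gS_lin smul_linl.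
- by move=> x; apply: smul_linr.
- by move=> x y t; rewrite smul_dot gS_dot.
- by move=> x t t'; rewrite smul_adj gS_conj.
Qed.

Lemma model_iso : exists n, (0 < n)%N /\ cdata_iso D (model n mul cj B).
Proof.
have [n [gT [gT_isom gT_lmul nd]]] := T1_free_module.
have [hS [hS_isom gSK hSK]] := lin_isom_inv gS_isom.
have [hT [hT_isom gTK hTK]] := lin_isom_inv gT_isom.
exists n; split; first by move: N_gt0; rewrite -nd muln_gt0 => /andP[].
have hS_vact v s : hS (vact v s) = mul (fV v *m B) (hS s).
  by rewrite -{1}[s]hSK vact_gS gSK.
have hT_smul s t : hT (smul s t) = @lmulA R d n mul (hS s) (hT t).
  by apply: (can_inj gTK); rewrite hTK gT_lmul hSK hTK.
have hT_S1 sg t : hT (- B1 eS (- E1 eV (C0 sg t)))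
    = @lmulA R d n mul (hS (- A1 eV sg)) (hT t).
  by rewrite -[in LHS](ca01K VS_cl eV_unit sg) assoc (ca10K VT_cl eV_unit) hT_smul.
have hS_eS : hS eS = one by rewrite -gS_one gSK.
have iS1 := ca1N_isom VS_cl eV_unit; have iT2 := ca1N_isom S0_cl eS_unit.
have iT3 := ca1N_isom VT_cl eV_unit.
apply: (@cdata_iso_ca0 _ D (model n mul cj B) _ _ _ _ _ _ _ _ fV_isom hS_isom
  (lin_isom_comp iS1 hS_isom) hT_isom (lin_isom_comp iT2 hT_isom)
  (lin_isom_comp iT3 (lin_isom_comp iT2 hT_isom))) => //=.
- by split; exact: clmod_skew.
- exact: model_skew.
- by move=> v u; rewrite -[in LHS](ca01K S0_cl eS_unit u) -assoc hT_S1 hS_vact hS_eS mul1.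
Qed.

End ModelIso.

Section ComplexStructure.
Hypothesis p_gt1 : (1 < p)%N.

Definition e1 : 'rV[R]_p := delta_mx 0 (Ordinal p_gt1).
Definition qi := vemb e1.

Lemma e1_unit : dotv e1 e1 = 1. Proof. by rewrite dotv_delta eqxx. Qed.
Lemma e1_eV : dotv e1 eV = 0. Proof. by rewrite dotv_delta. Qed.
Lemma qi_unit : dotv qi qi = 1. Proof. by rewrite vemb_dot e1_unit. Qed.
Lemma qi_eS : dotv qi eS = 0. Proof. by rewrite -vemb_eV vemb_dot e1_eV. Qed.

Lemma smul_qi_qi t : smul qi (smul qi t) = - t.
Proof. by rewrite smul_sq ?qi_eS // qi_unit scaleN1r. Qed.

Definition cframe (x : 'rV[R]_2) := cf x 0 *: eS + cf x 1 *: qi.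

Lemma cframe_lin : linear cframe.
Proof.
move=> a x y; rewrite /cframe !cfD !scalerDl -!scalerA.
by apply/rowP => i; rewrite !mxE; ring.
Qed.

Lemma cframe_dot : dotv_preserving cframe.
Proof.
move=> x y; rewrite /cframe dotv2 !dotvDl !dotvDr !dotvZl !dotvZr.
by rewrite eS_unit qi_unit qi_eS (dotvC eS) qi_eS; ring.
Qed.

Lemma cframe_one : cframe (mk2 1 0) = eS.
Proof. by rewrite /cframe !cfE scale1r scale0r addr0. Qed.

Lemma cframe_i : cframe (mk2 0 1) = qi.
Proof. by rewrite /cframe !cfE scale1r scale0r add0r. Qed.

Lemma smul_cframe x t : smul (cframe x) t = cf x 0 *: t + cf x 1 *: smul qi t.
Proof. by rewrite /cframe (linfunD (smul_linl t)) !(linfunZ (smul_linl t)) smul_eS. Qed.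

Lemma smul_cframe_mul x y t :
  smul (cframe (cmul x y)) t = smul (cframe x) (smul (cframe y) t).
Proof.
rewrite !smul_cframe (linfunD (smul_linr qi)) !(linfunZ (smul_linr qi)) smul_qi_qi.
by rewrite /cmul !cfE; apply/rowP => i; rewrite !mxE; ring.
Qed.

Lemma cframe_conj x : cframe (cconj x) = sconj (cframe x).
Proof.
rewrite /cframe /sconj /cconj !cfE dotvDl !dotvZl eS_unit qi_eS.
by apply/rowP => i; rewrite !mxE; ring.
Qed.

Lemma complex_model_iso : m = 2%N ->
  exists n, (0 < n)%N /\ cdata_iso D (model n (@cmul R) (@cconj R) (1%:M : 'M[R]_2)).
Proof.
move=> m2; have cframe_isom := dotv_preserving_isom (esym m2) cframe_lin cframe_dot.
have [hS [hS_isom _ cframeK]] := lin_isom_inv cframe_isom.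
have vemb_isom : lin_isom vemb.
  apply: (dotv_preserving_isom _ vemb_lin vemb_dot); apply/anti_leq.
  by rewrite (dotv_preserving_leq vemb_dot) m2.
apply: (model_iso cframe_isom cframe_one (@cmulr1 R) smul_cframe_mul cframe_conj
  (@cmul_skew R) (lin_isom_comp vemb_isom hS_isom)) => // v.
by rewrite mulmx1 /= cframeK.
Qed.

Lemma vact_e1K s : vact e1 (vact e1 s) = - s.
Proof.
apply: smul_eT_inj; rewrite /= (smul_vact e1 (vact e1 s)) (smul_vact e1 s) -/qi smul_qi_qi.
by rewrite (linfunN (smul_linl eT)).
Qed.

Section QuaternionStructure.
Variable qj : 'rV[R]_m.
Hypotheses (qj_unit : dotv qj qj = 1) (qj_eS : dotv qj eS = 0) (qj_qi : dotv qj qi = 0).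

Definition qk := vact e1 qj.

Lemma qk_unit : dotv qk qk = 1. Proof. by rewrite vact_dot e1_unit qj_unit mulr1. Qed.

Lemma qk_eS : dotv qk eS = 0.
Proof. by rewrite vact_skew ?e1_eV // -/(vemb e1) -/qi qj_qi oppr0. Qed.

Lemma qk_qi : dotv qk qi = 0.
Proof. by rewrite vact_skew ?e1_eV // vact_e1K dotvNr qj_eS !oppr0. Qed.

Lemma qk_qj : dotv qk qj = 0.
Proof. by have := vact_skew qj qj e1_eV; rewrite -/qk (dotvC qj qk); lra. Qed.

Lemma smul_qj_qi t : smul qj (smul qi t) = - smul qi (smul qj t).
Proof. by rewrite smul_anticomm_orth ?qi_eS ?qj_qi. Qed.

Lemma smul_qj_qj t : smul qj (smul qj t) = - t.
Proof. by rewrite smul_sq // qj_unit scaleN1r. Qed.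

Definition hframe (x : 'rV[R]_4) :=
  cf x 0 *: eS + cf x 1 *: qi + cf x 2 *: qj + cf x 3 *: qk.

Lemma hframe_lin : linear hframe.
Proof. by move=> a x y; rewrite /hframe !cfD; apply/rowP => i; rewrite !mxE; ring. Qed.

Lemma hframe_dot : dotv_preserving hframe.
Proof.
move=> x y; rewrite /hframe dotv4 !dotvDl !dotvDr !dotvZl !dotvZr.
rewrite eS_unit qi_unit qj_unit qk_unit (dotvC eS qi) (dotvC eS qj) (dotvC eS qk).
rewrite (dotvC qi qj) (dotvC qi qk) (dotvC qj qk).
by rewrite qi_eS qj_eS qk_eS qj_qi qk_qi qk_qj; ring.
Qed.

Lemma hframe_one : hframe (mk4 1 0 0 0) = eS.
Proof. by rewrite /hframe !cfE !scale0r scale1r !addr0. Qed.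

(* A unit vector q4 orthogonal to the frame gives the contradiction:
   L_(k_e1 q4) = L_i L_4 anticommutes with L_j, whence L_i L_j L_4 = 0. *)
Lemma S0_dim4 : m = 4%N.
Proof.
apply/anti_leq; rewrite (dotv_preserving_leq hframe_dot) andbT leqNgt.
apply/negP => m_gt4.
have [q4 [q4_unit q4_orth]] := exists_unit_orthogonal_image hframe_lin m_gt4.
have q4_frame a b c e :
    a * dotv eS q4 + b * dotv qi q4 + c * dotv qj q4 + e * dotv qk q4 = 0.
  by have := q4_orth (mk4 a b c e); rewrite /hframe !cfE !dotvDl !dotvZl.
have q4_eS : dotv q4 eS = 0 by rewrite dotvC; have := q4_frame 1 0 0 0; lra.
have q4_qi : dotv q4 qi = 0 by rewrite dotvC; have := q4_frame 0 1 0 0; lra.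
have q4_qj : dotv q4 qj = 0 by rewrite dotvC; have := q4_frame 0 0 1 0; lra.
have q4_qk : dotv q4 qk = 0 by rewrite dotvC; have := q4_frame 0 0 0 1; lra.
have q5_eS : dotv (vact e1 q4) eS = 0.
  by rewrite vact_skew ?e1_eV // -/(vemb e1) -/qi q4_qi oppr0.
have q5_qj : dotv (vact e1 q4) qj = 0 by rewrite vact_skew ?e1_eV // -/qk q4_qk oppr0.
set u := smul qi (smul qj (smul q4 eT)).
have u_unit : dotv u u = 1.
  by rewrite !smul_dot qi_unit qj_unit q4_unit eT_unit !mul1r.
have u_opp : u = - u.
  have := smul_anticomm_orth eT q5_eS qj_eS q5_qj.
  rewrite !(smul_vact e1 q4) -/qi (smul_anticomm_orth _ q4_eS qj_eS q4_qj).
  by rewrite (linfunN (smul_linr qi)) smul_qj_qi -/u => /oppr_inj.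
by have := u_unit; rewrite {2}u_opp dotvNr u_unit; lra.
Qed.

Lemma smul_hframe x t : smul (hframe x) t =
  cf x 0 *: t + cf x 1 *: smul qi t + cf x 2 *: smul qj t + cf x 3 *: smul qi (smul qj t).
Proof.
rewrite /hframe !(linfunD (smul_linl t)) !(linfunZ (smul_linl t)) smul_eS.
by rewrite (smul_vact e1 qj).
Qed.

Lemma smul_hframe_mul x y t :
  smul (hframe (hmul x y)) t = smul (hframe x) (smul (hframe y) t).
Proof.
have smul_ii v : smul qi (smul qi v) = (-1) *: v by rewrite smul_qi_qi scaleN1r.
have smul_jj v : smul qj (smul qj v) = (-1) *: v by rewrite smul_qj_qj scaleN1r.
have smul_ji v : smul qj (smul qi v) = (-1) *: smul qi (smul qj v).
  by rewrite smul_qj_qi scaleN1r.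
rewrite !smul_hframe.
do 4 rewrite ?(linfunD (smul_linr _)) ?(linfunZ (smul_linr _)) ?smul_ii ?smul_jj ?smul_ji.
rewrite /hmul !cfE; set b1 := smul qi t; set b2 := smul qj t; set b3 := smul qi b2.
by apply/rowP => i; rewrite !mxE; ring.
Qed.

Lemma hframe_conj x : hframe (hconj x) = sconj (hframe x).
Proof.
rewrite /hframe /sconj /hconj !cfE !dotvDl !dotvZl eS_unit qi_eS qj_eS qk_eS.
by apply/rowP => i; rewrite !mxE; ring.
Qed.

End QuaternionStructure.

Lemma quaternion_model_iso : (2 < m)%N ->
  exists n (B : 'M[R]_(p, 4)), (0 < n)%N /\ B *m B^T = 1%:M /\
    cdata_iso D (model n (@hmul R) (@hconj R) B).
Proof.
move=> m_gt2; have [qj [qj_unit qj_orth]] := exists_unit_orthogonal_image cframe_lin m_gt2.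
have qj_eS : dotv qj eS = 0 by rewrite dotvC -cframe_one qj_orth.
have qj_qi : dotv qj qi = 0 by rewrite dotvC -cframe_i qj_orth.
have hframe_isom := dotv_preserving_isom (esym (S0_dim4 qj_unit qj_eS qj_qi))
  (hframe_lin qj) (hframe_dot qj_unit qj_eS qj_qi).
have [hS [/lin_isomP[hS_lin hS_dot _] _ hframeK]] := lin_isom_inv hframe_isom.
have B_lin : linear (hS \o vemb) by move=> a u v /=; rewrite vemb_lin hS_lin.
have B_dot : dotv_preserving (hS \o vemb) by move=> u v /=; rewrite hS_dot vemb_dot.
have gS_vemb v : hframe qj (v *m lin1_mx (hS \o vemb)) = vemb v.
  by rewrite -(linfun_mx B_lin) /= hframeK.
have [n [n_gt0 iso]] := model_iso hframe_isom (hframe_one qj) (@hmulr1 R)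
  (smul_hframe_mul qj_unit qj_eS qj_qi) (hframe_conj qj_eS qj_qi) (@hmul_skew R)
  (@lin_isom_id R p) gS_vemb isT.
by exists n, (lin1_mx (hS \o vemb)); split => //; split => //; exact: lin1_mx_orthonormal.
Qed.

End ComplexStructure.
End Extension.

Theorem mainTheorem10 (R : realType) (D : cdata R) :
  clifford_ext D -> associative_ext D -> (0 < dT1 D)%N ->
  (* (a) *)
  (dV D = 1%N ->
     exists (k s0 s1 : nat) (m : clact R k s0 s1),
       (0 < k)%N /\ is_clmod m /\ cdata_iso D (ext_a m)) /\
  (* (b) *)
  ((1 < dV D)%N -> dS0 D = 2%N ->
     exists n : nat, (0 < n)%N /\ cdata_iso D (model n (@cmul R) (@cconj R) (1%:M : 'M[R]_2))) /\
  (* (c) *)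
  ((1 < dV D)%N -> (2 < dS0 D)%N ->
     exists (n : nat) (B : 'M[R]_(dV D, 4)),
       (0 < n)%N /\ B *m B^T = 1%:M /\ cdata_iso D (model n (@hmul R) (@hconj R) B)).
Proof.
case: D => p m m' N N2 N3 mVS mS0 mS1 mVT; rewrite /clifford_ext /associative_ext /=.
move=> [p_gt0 [S_nz [VS_cl [N12 [N23 [S0_cl [S1_cl VT_cl]]]]]]] assoc N_gt0.
subst N2 N3.
split; [|split] => [p1 | p_gt1 m2 | p_gt1 m_gt2].
- subst p; exists m, N, N, mS0.
  by split; [exact: dim_one_S0_gt0 VS_cl S_nz | split; last exact: dim_one_iso].
- have m_gt0 : (0 < m)%N by rewrite m2.
  exact: complex_model_iso VS_cl S0_cl S1_cl VT_cl assoc p_gt0 m_gt0 N_gt0 p_gt1 m2.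
- have m_gt0 : (0 < m)%N by apply: ltn_trans m_gt2.
  exact: quaternion_model_iso VS_cl S0_cl S1_cl VT_cl assoc p_gt0 m_gt0 N_gt0 p_gt1 m_gt2.
Qed.
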